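(* Let $L>0$, $K>0$, $L_p a>0$, $t_0>0$, $0<\nu_{\min}<\nu_{\max}$, and let $\sigma_1,\sigma_2,p_0,w_0,w_D,q_l$ be real constants. Put $\beta=\frac{L_paL^2}{K}$ and $\nu(x)=\nu_{\max}-(\nu_{\max}-\nu_{\min})x$ for $x\in[0,1]$. Let $p,u,w$ be twice continuously differentiable functions on $[0,1]$ satisfying $$\frac{1}{t_0}\frac{d}{dx}\Big(\nu \frac{dp}{dx}\Big) - \sigma_1\frac{d}{dx}\Big(\nu \frac{du}{dx}\Big) - \sigma_2\frac{d}{dx}\Big(\nu\frac{dw}{dx}\Big) + q_U - q_l = 0 \quad\text{on } [0,1],$$ where $$q_U(x) = \beta\Big(\frac{1}{t_0}(p_0-p(x)) + \sigma_1 u(x) + \sigma_2 (w(x)-w_0)\Big),$$ together with $p(0)=1$, $u(0)=1$, $w(0)=w_D$, $p'(1)=u'(1)=w'(1)=0$. Define $$j_U(x) = L\nu(x)\Big(-\frac{1}{t_0}p'(x) + \sigma_1 u'(x) + \sigma_2 w'(x)\Big).$$ Put $\nu_*=\frac{\nu_{\max}}{\nu_{\max}-\nu_{\min}}$, $\delta_*=\frac{L_paL^2}{K(\nu_{\max}-\nu_{\min})}$, $z(x)=2\sqrt{\delta_*(\nu_*-x)}$, $z_0=z(0)$, $z_1=z(1)$, $$q_0 = \beta\Big(\frac{1}{t_0}(p_0-1)+\sigma_1+\sigma_2 (w_D - w_0)\Big),\quad D = I_0(z_0)K_1(z_1)+K_0(z_0)I_1(z_1),$$ $$C_1=\frac{(q_0-q_l)K_1(z_1)}{D},\qquad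 C_2=\frac{(q_0-q_l)I_1(z_1)}{D},$$ where $I_0,I_1$ and $K_0,K_1$ are the modified Bessel functions of the first and second (Macdonald) kind of orders $0$ and $1$. Then for all $x\in[0,1]$ $$q_U(x)=C_1I_0(z(x))+C_2K_0(z(x))+q_l,\qquad j_U(x)=-L\sqrt{\frac{\nu_*-x}{\delta_*}}\,\Big(C_1I_1(z(x))-C_2K_1(z(x))\Big).$$
   Context: This is the steady-state fluid balance equation of a non-dimensionalised model of fluid, glucose and albumin transport in peritoneal dialysis, under the assumptions that the reflection coefficients in tissue and capillary wall coincide and that the fractional void volume $\nu$ decreases linearly in the non-dimensional depth $x\in[0,1]$ from $\nu_{\max}$ to $\nu_{\min}$. Here $p$ is non-dimensional hydrostatic pressure, $u,w$ non-dimensional glucose and albumin concentrations, $q_U$ the density of fluid flux from blood to tissue, $j_U$ the fluid flux across the tissue, $q_l$ the lymphatic flux density, $w_D$ and $w_0$ the non-dimensional albumin concentrations in dialysate and blood. Note $\nu_*>1$ and $\delta_*>0$, so $z(x)>0$ on $[0,1]$. *)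

From Stdlib Require Import Reals Factorial.
From Coquelicot Require Import Coquelicot.
Open Scope R_scope.

Definition BesselI (n : nat) (z : R) : R :=
  Series (fun k => (z / 2) ^ (2 * k + n) / (INR (fact k) * INR (fact (k + n)))).

Definition BesselK (n : nat) (z : R) : R :=
  RInt_gen (fun t => exp (- z * cosh t) * cosh (INR n * t))
    (at_point 0) (Rbar_locally p_infty).

(* f is twice continuously differentiable on [0,1] (in the two-sided sense at
   each point of [0,1], i.e. f is taken as a function on R). *)
Definition C2_on01 (f : R -> R) : Prop :=
  forall x, 0 <= x <= 1 ->
    ex_derive f x /\ ex_derive (Derive f) x /\ continuous (Derive (Derive f)) x.

From Stdlib Require Import Reals Factorial Lra Lia.
From Coquelicot Require Import Coquelicot.
Open Scope R_scope.

(* With the source [E = qU - ql] and the flux [H = jU / L], the model is the first order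
   system [E' = (deltastar / (nustar - x)) H], [H' = E], with [E (0) = q0 - ql] and [H (1) = 0].
   The Bessel profile solves the same system: with [z' = - 2 deltastar / z] this follows from
   [I0' = I1], [(z I1)' = z I0], [K0' = - K1] and [(z K1)' = - z K0], and C1, C2 are chosen
   to match the two boundary values.  Such a two point problem has at most one solution,
   because the energy [E H] is nondecreasing and vanishes at both ends.  The formulas for
   [K0] and [K1] come from the substitution [t = - ln u], which turns the integral defining
   [BesselK] into a proper integral over (0, 1] that may be differentiated under the
   integral sign. *)

(** * Modified Bessel functions of the first kind *)

Definition I0_coef (n : nat) : R := / (INR (fact n) * INR (fact n)).
Definition I1_coef (n : nat) : R := / (INR (fact n) * INR (fact (n + 1))).

Lemma INR_fact_S n : INR (fact (S n)) = INR (S n) * INR (fact n).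
Proof. rewrite <- mult_INR. reflexivity. Qed.

Lemma CV_radius_I0_coef : CV_radius I0_coef = p_infty.
Proof.
  apply CV_radius_infinite_DAlembert.
  - intros n. unfold I0_coef. apply Rinv_neq_0_compat.
    pose proof (INR_fact_lt_0 n). nra.
  - apply is_lim_seq_le_le with (u := fun _ => 0) (w := fun n => / INR (S n)).
    + intros n. unfold I0_coef. rewrite INR_fact_S.
      pose proof (INR_fact_lt_0 n). assert (1 <= INR (S n)) by (apply (le_INR 1); lia).
      replace (/ (INR (S n) * INR (fact n) * (INR (S n) * INR (fact n))) /
                / (INR (fact n) * INR (fact n))) with (/ (INR (S n) * INR (S n))) by (field; lra).
      rewrite Rabs_pos_eq by (left; apply Rinv_0_lt_compat; nra).
      split; [left; apply Rinv_0_lt_compat; nra | apply Rinv_le_contravar; nra].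
    + apply is_lim_seq_const.
    + replace (Finite 0) with (Rbar_inv p_infty) by reflexivity.
      apply is_lim_seq_inv; [|discriminate].
      apply (is_lim_seq_incr_1 INR p_infty), is_lim_seq_INR.
Qed.

Lemma PS_derive_I0_coef n : PS_derive I0_coef n = I1_coef n.
Proof.
  unfold PS_derive, I0_coef, I1_coef. rewrite Nat.add_1_r, INR_fact_S.
  pose proof (INR_fact_lt_0 n). assert (0 < INR (S n)) by (apply lt_0_INR; lia).
  field. split; lra.
Qed.

Lemma PS_derive_incr_1_I1_coef n : PS_derive (PS_incr_1 I1_coef) n = I0_coef n.
Proof.
  unfold PS_derive, I0_coef, I1_coef. simpl PS_incr_1. rewrite Nat.add_1_r, INR_fact_S.
  pose proof (INR_fact_lt_0 n). assert (0 < INR (S n)) by (apply lt_0_INR; lia).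
  field. split; lra.
Qed.

Lemma CV_radius_I1_coef : CV_radius I1_coef = p_infty.
Proof.
  rewrite <- CV_radius_I0_coef, <- (CV_radius_derive I0_coef).
  apply CV_radius_ext. intros n. symmetry. apply PS_derive_I0_coef.
Qed.

Lemma is_derive_PSeries_I0_coef s : is_derive (PSeries I0_coef) s (PSeries I1_coef s).
Proof.
  rewrite <- (PSeries_ext (PS_derive I0_coef)) by apply PS_derive_I0_coef.
  apply is_derive_PSeries. rewrite CV_radius_I0_coef. exact I.
Qed.

Lemma is_derive_mult_PSeries_I1_coef s :
  is_derive (fun s => s * PSeries I1_coef s) s (PSeries I0_coef s).
Proof.
  apply is_derive_ext with (f := PSeries (PS_incr_1 I1_coef)).
  { intros t. apply PSeries_incr_1. }
  rewrite <- (PSeries_ext (PS_derive (PS_incr_1 I1_coef)))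
    by apply PS_derive_incr_1_I1_coef.
  apply is_derive_PSeries. rewrite CV_radius_incr_1, CV_radius_I1_coef. exact I.
Qed.

Lemma PSeries_ge_constant_term a s :
  (forall n, 0 <= a n) -> 0 <= s -> CV_radius a = p_infty -> a 0%nat <= PSeries a s.
Proof.
  intros Ha Hs Hcv.
  rewrite PSeries_decr_1 by (apply CV_radius_inside; rewrite Hcv; exact I).
  enough (0 <= PSeries (PS_decr_1 a) s) by nra.
  replace 0 with (Series (fun _ => 0 * 0)) by (rewrite Series_scal_l; ring).
  unfold PSeries. apply Series_le.
  - intros n. rewrite Rmult_0_r. split; [lra|].
    apply Rmult_le_pos; [apply Ha | apply pow_le; lra].
  - apply ex_pseries_R, CV_radius_inside. rewrite CV_radius_decr_1, Hcv. exact I.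
Qed.

Lemma BesselI0_PSeries z : BesselI 0 z = PSeries I0_coef ((z / 2) ^ 2).
Proof.
  unfold BesselI, PSeries. apply Series_ext. intros k.
  unfold I0_coef. rewrite !Nat.add_0_r, <- pow_mult.
  pose proof (INR_fact_lt_0 k). field. lra.
Qed.

Lemma BesselI1_PSeries z : BesselI 1 z = z / 2 * PSeries I1_coef ((z / 2) ^ 2).
Proof.
  unfold PSeries. rewrite <- Series_scal_l. unfold BesselI. apply Series_ext. intros k.
  unfold I1_coef. rewrite <- pow_mult, !Nat.add_1_r, <- tech_pow_Rmult.
  pose proof (INR_fact_lt_0 k). pose proof (INR_fact_lt_0 (S k)). field. lra.
Qed.

Lemma is_derive_BesselI0 z : is_derive (BesselI 0) z (BesselI 1 z).
Proof.
  apply is_derive_ext with (f := fun y => PSeries I0_coef ((y / 2) ^ 2)).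
  { intros y. symmetry. apply BesselI0_PSeries. }
  rewrite BesselI1_PSeries.
  apply (is_derive_comp (PSeries I0_coef) (fun y => (y / 2) ^ 2));
    [apply is_derive_PSeries_I0_coef|].
  auto_derive; [exact I | field].
Qed.

Lemma is_derive_mult_BesselI1 z :
  is_derive (fun y => y * BesselI 1 y) z (z * BesselI 0 z).
Proof.
  apply is_derive_ext with
    (f := fun y : R => 2 * ((fun s => s * PSeries I1_coef s) ((y / 2) ^ 2))).
  { intros y. rewrite BesselI1_PSeries. change (NormedModule.sort _ _) with R. field. }
  rewrite BesselI0_PSeries.
  replace (z * PSeries I0_coef ((z / 2) ^ 2))
    with (2 * (z / 2 * PSeries I0_coef ((z / 2) ^ 2))) by field.
  apply (is_derive_scal (fun y => (fun s => s * PSeries I1_coef s) ((y / 2) ^ 2))).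
  apply (is_derive_comp (fun s => s * PSeries I1_coef s) (fun y => (y / 2) ^ 2));
    [apply is_derive_mult_PSeries_I1_coef|].
  auto_derive; [exact I | field].
Qed.

Lemma BesselI0_pos z : 0 < BesselI 0 z.
Proof.
  rewrite BesselI0_PSeries. eapply Rlt_le_trans; [|apply PSeries_ge_constant_term].
  - unfold I0_coef. simpl. lra.
  - intros n. unfold I0_coef. pose proof (INR_fact_lt_0 n).
    left. apply Rinv_0_lt_compat. nra.
  - apply pow2_ge_0.
  - apply CV_radius_I0_coef.
Qed.

Lemma BesselI1_pos z : 0 < z -> 0 < BesselI 1 z.
Proof.
  intros Hz. rewrite BesselI1_PSeries. apply Rmult_lt_0_compat; [lra|].
  eapply Rlt_le_trans; [|apply PSeries_ge_constant_term].
  - unfold I1_coef. simpl. lra.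
  - intros n. unfold I1_coef. pose proof (INR_fact_lt_0 n).
    pose proof (INR_fact_lt_0 (n + 1)). left. apply Rinv_0_lt_compat. nra.
  - apply pow2_ge_0.
  - apply CV_radius_I1_coef.
Qed.

(** * Macdonald functions *)

Lemma exp_neg_le_fact_div_pow (y : R) (m : nat) :
  0 < y -> exp (- y) <= INR (fact m) / y ^ m.
Proof.
  intros Hy.
  assert (Hterm : y ^ m / INR (fact m) <= exp y).
  { eapply Rle_trans; [|apply (exp_ge_taylor y m); lra].
    destruct m as [|m]; [simpl; lra|]. rewrite tech5.
    enough (0 <= sum_f_R0 (fun k => y ^ k / INR (fact k)) m) by lra.
    apply cond_pos_sum. intros k. apply Rmult_le_pos; [apply pow_le; lra|].
    apply Rlt_le, Rinv_0_lt_compat, INR_fact_lt_0. }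
  pose proof (INR_fact_lt_0 m). pose proof (pow_lt y m Hy). pose proof (exp_pos y).
  rewrite exp_Ropp.
  apply (Rmult_le_reg_r (exp y * y ^ m / INR (fact m))).
  - apply Rdiv_lt_0_compat; [apply Rmult_lt_0_compat|]; lra.
  - replace (/ exp y * (exp y * y ^ m / INR (fact m))) with (y ^ m / INR (fact m))
      by (field; lra).
    replace (INR (fact m) / y ^ m * (exp y * y ^ m / INR (fact m))) with (exp y)
      by (field; lra).
    exact Hterm.
Qed.

(* [ch u = cosh (- ln u)] and [sh u = sinh (- ln u)]: the substitution [u = exp (- t)]
   turns the integral over [0, +oo) defining [BesselK] into a proper integral over (0, 1]. *)
Definition ch (u : R) : R := (u + / u) / 2.
Definition sh (u : R) : R := (/ u - u) / 2.

Lemma ch_pos u : 0 < u -> 0 < ch u.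
Proof. intros Hu. unfold ch. pose proof (Rinv_0_lt_compat u Hu). lra. Qed.

Lemma ch_exp_opp t : ch (exp (- t)) = cosh t.
Proof. unfold ch, cosh. rewrite <- exp_Ropp, Ropp_involutive. field. Qed.

(* Extended by 0 to [u <= 0]; the extension is continuous because the kernel decays like
   [exp (- z / (2 u))] as [u] tends to 0+. *)
Definition K_kernel (n : nat) (z u : R) : R :=
  if Rle_dec u 0 then 0 else ch u ^ n * exp (- z * ch u) / u.

Lemma K_kernel_0 n z : K_kernel n z 0 = 0.
Proof. unfold K_kernel. destruct (Rle_dec 0 0); [reflexivity | lra]. Qed.

Definition K_kernel_bound (n : nat) (a : R) : R := INR (fact (n + 2)) * (2 / a) ^ (n + 2).

Lemma K_kernel_bound_pos n a : 0 < a -> 0 < K_kernel_bound n a.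
Proof.
  intros Ha. apply Rmult_lt_0_compat; [apply INR_fact_lt_0|].
  apply pow_lt, Rdiv_lt_0_compat; lra.
Qed.

Lemma K_kernel_nonneg n z u : 0 <= K_kernel n z u.
Proof.
  unfold K_kernel. destruct (Rle_dec u 0) as [|Hu]; [lra|].
  pose proof (ch_pos u ltac:(lra)).
  apply Rmult_le_pos; [apply Rmult_le_pos|].
  - apply pow_le; lra.
  - apply Rlt_le, exp_pos.
  - apply Rlt_le, Rinv_0_lt_compat; lra.
Qed.

Lemma K_kernel_le n a z u :
  0 < a -> a <= z -> 0 <= u <= 1 -> K_kernel n z u <= K_kernel_bound n a * u.
Proof.
  intros Ha Haz Hu. unfold K_kernel. destruct (Rle_dec u 0) as [|Hu0].
  { pose proof (K_kernel_bound_pos n a Ha). nra. }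
  assert (Hv : 1 <= / u) by (rewrite <- Rinv_1; apply Rinv_le_contravar; lra).
  assert (Hch : / u / 2 <= ch u <= / u) by (unfold ch; nra).
  assert (Hexp : exp (- z * ch u) <= INR (fact (n + 2)) / (a * / u / 2) ^ (n + 2)).
  { eapply Rle_trans; [|apply exp_neg_le_fact_div_pow; nra].
    assert (a * (/ u / 2) <= z * ch u) by (apply Rmult_le_compat; lra).
    assert (Hle : - z * ch u <= - (a * / u / 2)) by lra.
    destruct Hle as [Hlt|Heq]; [left; apply exp_increasing, Hlt | right; rewrite Heq; reflexivity]. }
  assert (Hpow : ch u ^ n <= (/ u) ^ n) by (apply pow_incr; nra).
  apply Rle_trans with ((/ u) ^ n * (INR (fact (n + 2)) / (a * / u / 2) ^ (n + 2)) * / u).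
  { apply Rmult_le_compat_r; [apply Rlt_le, Rinv_0_lt_compat; lra|].
    apply Rmult_le_compat; [apply pow_le; nra | apply Rlt_le, exp_pos | |]; assumption. }
  right. unfold K_kernel_bound.
  replace (a * / u / 2) with (/ (2 / a) * / u) by (field; lra).
  rewrite Rpow_mult_distr, !pow_inv, !pow_add.
  assert (u ^ n <> 0) by (apply pow_nonzero; lra).
  assert ((2 / a) ^ n <> 0) by (apply pow_nonzero; apply Rgt_not_eq, Rdiv_lt_0_compat; lra).
  simpl. field. repeat split; lra.
Qed.

Lemma K_kernel_continuous_at_0 n z : 0 < z -> continuity_2d_pt (K_kernel n) z 0.
Proof.
  intros Hz eps.
  pose (M := K_kernel_bound n (z / 2)).
  assert (HM : 0 < M) by (apply K_kernel_bound_pos; lra).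
  assert (Hd : 0 < Rmin 1 (Rmin (z / 2) (eps / M))).
  { repeat apply Rmin_pos; try lra. apply Rdiv_lt_0_compat; [apply cond_pos | exact HM]. }
  exists (mkposreal _ Hd). intros y u Hy Hu. simpl in Hy, Hu.
  pose proof (Rmin_l 1 (Rmin (z / 2) (eps / M))).
  pose proof (Rmin_r 1 (Rmin (z / 2) (eps / M))).
  pose proof (Rmin_l (z / 2) (eps / M)). pose proof (Rmin_r (z / 2) (eps / M)).
  apply Rabs_def2 in Hy. rewrite Rminus_0_r in Hu. apply Rabs_def2 in Hu.
  rewrite K_kernel_0, Rminus_0_r, Rabs_pos_eq by apply K_kernel_nonneg.
  destruct (Rle_dec u 0) as [Hu0|Hu0].
  { unfold K_kernel. destruct (Rle_dec u 0); [apply cond_pos | lra]. }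
  eapply Rle_lt_trans; [apply (K_kernel_le n (z / 2)); lra|].
  apply Rlt_le_trans with (M * (eps / M)); [apply Rmult_lt_compat_l; lra|].
  right. field. lra.
Qed.

Lemma K_kernel_continuous n z u : 0 < z -> continuity_2d_pt (K_kernel n) z u.
Proof.
  intros Hz. destruct (Rtotal_order u 0) as [Hu|[->|Hu]].
  - apply continuity_2d_pt_ext_loc with (f := fun _ _ => 0);
      [|apply continuity_2d_pt_const].
    exists (mkposreal (- u) ltac:(lra)). intros y v _ Hv. simpl in Hv.
    apply Rabs_def2 in Hv. unfold K_kernel. destruct (Rle_dec v 0); [reflexivity | lra].
  - apply K_kernel_continuous_at_0, Hz.
  - apply continuity_2d_pt_ext_loc with
      (f := fun y v => ((v + / v) * / 2) ^ n * exp (- y * ((v + / v) * / 2)) * / v).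
    { exists (mkposreal u Hu). intros y v _ Hv. simpl in Hv.
      apply Rabs_def2 in Hv. unfold K_kernel, ch.
      destruct (Rle_dec v 0); [lra | reflexivity]. }
    assert (Hch : continuity_2d_pt (fun _ v => (v + / v) * / 2) z u).
    { apply continuity_2d_pt_mult; [|apply continuity_2d_pt_const].
      apply continuity_2d_pt_plus; [apply continuity_2d_pt_id2|].
      apply continuity_2d_pt_inv; [apply continuity_2d_pt_id2 | lra]. }
    repeat apply continuity_2d_pt_mult.
    + apply continuity_1d_2d_pt_comp with (f := fun c => c ^ n); [|exact Hch].
      apply derivable_continuous_pt, derivable_pt_pow.
    + apply continuity_1d_2d_pt_comp with (f := exp);
        [apply derivable_continuous_pt, derivable_pt_exp|].
      apply continuity_2d_pt_mult; [|exact Hch].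
      apply continuity_2d_pt_opp, continuity_2d_pt_id1.
    + apply continuity_2d_pt_inv; [apply continuity_2d_pt_id2 | lra].
Qed.

Lemma K_kernel_continuous_in_u n z u : 0 < z -> continuous (K_kernel n z) u.
Proof.
  intros Hz. apply continuity_pt_filterlim. intros eps Heps.
  destruct (K_kernel_continuous n z u Hz (mkposreal eps Heps)) as [d Hd].
  exists d. split; [apply cond_pos|]. intros v [_ Hv]. simpl in *.
  apply Hd; [|exact Hv]. rewrite Rminus_eq_0, Rabs_R0. apply cond_pos.
Qed.

Lemma ex_RInt_K_kernel n z a b : 0 < z -> ex_RInt (K_kernel n z) a b.
Proof.
  intros Hz. apply (ex_RInt_continuous (V := R_CompleteNormedModule)).
  intros u _. apply K_kernel_continuous_in_u, Hz.
Qed.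

Lemma is_derive_K_kernel n z u : is_derive (fun y => K_kernel n y u) z (- K_kernel (S n) z u).
Proof.
  unfold K_kernel. destruct (Rle_dec u 0).
  - auto_derive; [exact I | ring].
  - auto_derive; [exact I | simpl; unfold Rdiv; ring].
Qed.

Lemma is_derive_RInt_K_kernel n z : 0 < z ->
  is_derive (fun y => RInt (K_kernel n y) 0 1) z (- RInt (K_kernel (S n) z) 0 1).
Proof.
  intros Hz.
  assert (HD : forall y v, Derive (fun y => K_kernel n y v) y = - K_kernel (S n) y v).
  { intros y v. apply is_derive_unique, is_derive_K_kernel. }
  replace (- RInt (K_kernel (S n) z) 0 1)
    with (RInt (fun v => Derive (fun y => K_kernel n y v) z) 0 1).
  2:{ rewrite (RInt_ext _ (fun v => opp (K_kernel (S n) z v))) by (intros; apply HD).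
      rewrite (RInt_opp (V := R_CompleteNormedModule)); [reflexivity|].
      apply ex_RInt_K_kernel, Hz. }
  apply (is_derive_RInt_param (K_kernel n)).
  - apply filter_forall. intros y v _. eexists. apply is_derive_K_kernel.
  - intros v _. apply continuity_2d_pt_ext with (f := fun y v => - K_kernel (S n) y v).
    { intros y w. symmetry. apply HD. }
    apply continuity_2d_pt_opp, K_kernel_continuous, Hz.
  - apply (filter_imp (fun y => 0 < y)); [intros y Hy; apply ex_RInt_K_kernel, Hy|].
    apply (open_gt 0), Hz.
Qed.

Lemma BesselK_integrand_exp_opp n z t : (n <= 1)%nat ->
  exp (- z * cosh t) * cosh (INR n * t) = exp (- t) * K_kernel n z (exp (- t)).
Proof.
  intros Hn. pose proof (exp_pos (- t)) as He.
  unfold K_kernel. destruct (Rle_dec (exp (- t)) 0) as [|_]; [lra|].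
  rewrite ch_exp_opp.
  destruct n as [|[|n]]; [| |lia]; simpl INR.
  - rewrite Rmult_0_l, cosh_0. field. lra.
  - rewrite Rmult_1_l. field. lra.
Qed.

Lemma is_RInt_BesselK_integrand n z b : (n <= 1)%nat -> 0 < z ->
  is_RInt (fun t => exp (- z * cosh t) * cosh (INR n * t)) 0 b
    (RInt (K_kernel n z) (exp (- b)) 1).
Proof.
  intros Hn Hz.
  apply is_RInt_ext with (f := fun t => opp (scal (- exp (- t)) (K_kernel n z (exp (- t))))).
  { intros t _. rewrite BesselK_integrand_exp_opp by exact Hn.
    unfold opp, scal; simpl; unfold mult; simpl. ring. }
  replace (RInt (K_kernel n z) (exp (- b)) 1)
    with (opp (RInt (K_kernel n z) (exp (- 0)) (exp (- b)))).
  2:{ rewrite Ropp_0, exp_0, (opp_RInt_swap (V := R_CompleteNormedModule));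
        [reflexivity | apply ex_RInt_K_kernel, Hz]. }
  apply (is_RInt_opp (V := R_NormedModule)).
  apply (is_RInt_comp (V := R_CompleteNormedModule) (K_kernel n z)
           (fun t => exp (- t)) (fun t => - exp (- t))).
  - intros t _. apply K_kernel_continuous_in_u, Hz.
  - intros t _. split.
    + auto_derive; [exact I | ring].
    + apply (ex_derive_continuous (K := R_AbsRing) (V := R_NormedModule)).
      auto_derive. exact I.
Qed.

Lemma is_RInt_gen_BesselK_integrand n z : (n <= 1)%nat -> 0 < z ->
  is_RInt_gen (fun t => exp (- z * cosh t) * cosh (INR n * t))
    (at_point 0) (Rbar_locally p_infty) (RInt (K_kernel n z) 0 1).
Proof.
  intros Hn Hz P [eps HP].
  pose (M := K_kernel_bound n z).
  assert (HM : 0 < M) by (apply K_kernel_bound_pos, Hz).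
  assert (HeM : 0 < eps / M) by (apply Rdiv_lt_0_compat; [apply cond_pos | exact HM]).
  pose (b0 := Rmax 0 (- ln (eps / M))).
  apply Filter_prod with (Q := fun a => a = 0) (R := fun b => b0 < b);
    [reflexivity | exists b0; auto|].
  intros a b -> Hb. simpl.
  pose proof (Rmax_l 0 (- ln (eps / M))). pose proof (Rmax_r 0 (- ln (eps / M))).
  exists (RInt (K_kernel n z) (exp (- b)) 1).
  split; [apply is_RInt_BesselK_integrand; assumption|]. apply HP.
  assert (He : 0 < exp (- b) <= 1).
  { split; [apply exp_pos|]. rewrite <- exp_0. left. apply exp_increasing. unfold b0 in *. lra. }
  assert (HeM' : exp (- b) < eps / M).
  { rewrite <- (exp_ln (eps / M)) by exact HeM. apply exp_increasing. unfold b0 in *. lra. }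
  rewrite <- (RInt_Chasles (V := R_CompleteNormedModule) (K_kernel n z) 0 (exp (- b)) 1)
    by apply ex_RInt_K_kernel, Hz.
  unfold ball; simpl; unfold AbsRing_ball, abs, minus, plus, opp; simpl.
  replace (RInt (K_kernel n z) (exp (- b)) 1
           + - (RInt (K_kernel n z) 0 (exp (- b)) + RInt (K_kernel n z) (exp (- b)) 1))
    with (- RInt (K_kernel n z) 0 (exp (- b))) by ring.
  rewrite Rabs_Ropp.
  eapply Rle_lt_trans.
  { apply abs_RInt_le_const with (M := M); [lra | apply ex_RInt_K_kernel, Hz|].
    intros t Ht. rewrite Rabs_pos_eq by apply K_kernel_nonneg.
    eapply Rle_trans; [apply (K_kernel_le n z); lra|].
    rewrite <- (Rmult_1_r M). apply Rmult_le_compat_l; lra. }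
  apply Rlt_le_trans with (eps / M * M); [apply Rmult_lt_compat_r; lra|].
  right. field. lra.
Qed.

Lemma BesselK_RInt_K_kernel n z : (n <= 1)%nat -> 0 < z ->
  BesselK n z = RInt (K_kernel n z) 0 1.
Proof.
  intros Hn Hz. apply is_RInt_gen_unique, is_RInt_gen_BesselK_integrand; assumption.
Qed.

(* Since [ch' = - sh / u], [sh' = - ch / u] and [sh ^ 2 = ch ^ 2 - 1], the derivative of
   [sh u * exp (- z * ch u)] is [K_recurrence_integrand z u]. *)
Definition K_antiderivative (z u : R) : R :=
  if Rle_dec u 0 then 0 else sh u * exp (- z * ch u).

Definition K_recurrence_integrand (z u : R) : R :=
  z * K_kernel 2 z u - z * K_kernel 0 z u - K_kernel 1 z u.

Lemma is_derive_K_antiderivative_pos z u : 0 < u ->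
  is_derive (K_antiderivative z) u (K_recurrence_integrand z u).
Proof.
  intros Hu.
  apply is_derive_ext_loc with (f := fun v => sh v * exp (- z * ch v)).
  { apply (filter_imp (fun v => 0 < v)); [|apply (open_gt 0), Hu].
    intros v Hv. unfold K_antiderivative. destruct (Rle_dec v 0); [lra | reflexivity]. }
  unfold K_recurrence_integrand, K_kernel. destruct (Rle_dec u 0); [lra|].
  unfold sh, ch. auto_derive; [lra|]. simpl. unfold Rdiv. field. lra.
Qed.

(* At 0 the antiderivative is flat: it vanishes for [u <= 0] and is [O(u ^ 2)] for [u > 0]. *)
Lemma is_derive_K_antiderivative_0 z : 0 < z -> is_derive (K_antiderivative z) 0 0.
Proof.
  intros Hz. apply is_derive_Reals. intros eps Heps.
  pose (M := K_kernel_bound 1 z).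
  assert (HM : 0 < M) by (apply K_kernel_bound_pos, Hz).
  assert (Hd : 0 < Rmin 1 (eps / M)) by (apply Rmin_pos; [lra | apply Rdiv_lt_0_compat; lra]).
  exists (mkposreal _ Hd). intros h Hh0 Hh. simpl in Hh.
  pose proof (Rmin_l 1 (eps / M)). pose proof (Rmin_r 1 (eps / M)).
  apply Rabs_def2 in Hh.
  rewrite Rplus_0_l, Rminus_0_r.
  replace (K_antiderivative z 0) with 0
    by (unfold K_antiderivative; destruct (Rle_dec 0 0); lra).
  unfold K_antiderivative. destruct (Rle_dec h 0) as [|Hh1].
  { rewrite Rminus_0_r. unfold Rdiv. rewrite Rmult_0_l, Rabs_R0. exact Heps. }
  assert (Hih : 1 <= / h) by (rewrite <- Rinv_1; apply Rinv_le_contravar; lra).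
  assert (Hsh : 0 <= sh h <= ch h) by (unfold sh, ch; lra).
  assert (Hk : K_kernel 1 z h <= M * h) by (apply K_kernel_le; lra).
  assert (Hkh : K_kernel 1 z h = ch h * exp (- z * ch h) / h).
  { unfold K_kernel. destruct (Rle_dec h 0); [lra|]. rewrite pow_1. reflexivity. }
  pose proof (exp_pos (- z * ch h)).
  rewrite Rminus_0_r, Rabs_pos_eq.
  2:{ apply Rdiv_le_0_compat; [apply Rmult_le_pos|]; lra. }
  apply Rle_lt_trans with (K_kernel 1 z h).
  { rewrite Hkh. apply Rmult_le_compat_r; [apply Rlt_le, Rinv_0_lt_compat; lra|].
    apply Rmult_le_compat_r; lra. }
  apply Rle_lt_trans with (M * h); [exact Hk|].
  apply Rlt_le_trans with (M * (eps / M)); [apply Rmult_lt_compat_l; lra|].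
  right. field. lra.
Qed.

Lemma K_kernel_recurrence z : 0 < z ->
  z * RInt (K_kernel 2 z) 0 1 = z * RInt (K_kernel 0 z) 0 1 + RInt (K_kernel 1 z) 0 1.
Proof.
  intros Hz.
  assert (Hint : is_RInt (K_recurrence_integrand z) 0 1
                   (z * RInt (K_kernel 2 z) 0 1 - z * RInt (K_kernel 0 z) 0 1
                    - RInt (K_kernel 1 z) 0 1)).
  { unfold K_recurrence_integrand.
    assert (HK : forall n, is_RInt (K_kernel n z) 0 1 (RInt (K_kernel n z) 0 1))
      by (intros n; apply (RInt_correct (V := R_CompleteNormedModule)), ex_RInt_K_kernel, Hz).
    apply (is_RInt_minus (V := R_NormedModule)); [apply (is_RInt_minus (V := R_NormedModule))|];
      [apply (is_RInt_scal (V := R_NormedModule)), HK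
      |apply (is_RInt_scal (V := R_NormedModule)), HK
      |apply HK]. }
  assert (Hftc : is_RInt (K_recurrence_integrand z) 0 1
                   (K_antiderivative z 1 - K_antiderivative z 0)).
  { apply (is_RInt_derive (V := R_CompleteNormedModule)).
    - intros u Hu. rewrite Rmin_left, Rmax_right in Hu by lra.
      destruct (Req_dec u 0) as [->|Hu0].
      + unfold K_recurrence_integrand. rewrite !K_kernel_0.
        replace (z * 0 - z * 0 - 0) with 0 by ring.
        apply is_derive_K_antiderivative_0, Hz.
      + apply is_derive_K_antiderivative_pos. lra.
    - intros u _. unfold K_recurrence_integrand.
      pose proof (fun n => K_kernel_continuous_in_u n z u Hz) as HK.
      apply (continuous_minus (K := R_AbsRing) (V := R_NormedModule));
        [apply (continuous_minus (K := R_AbsRing) (V := R_NormedModule))|];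
        [apply (continuous_scal_r (K := R_AbsRing) (V := R_NormedModule) z), HK
        |apply (continuous_scal_r (K := R_AbsRing) (V := R_NormedModule) z), HK
        |apply HK]. }
  assert (Hends : K_antiderivative z 1 - K_antiderivative z 0 = 0).
  { unfold K_antiderivative, sh.
    destruct (Rle_dec 1 0); [lra|]. destruct (Rle_dec 0 0); [|lra].
    rewrite Rinv_1. field. }
  pose proof (is_RInt_unique _ _ _ _ Hint) as E1.
  rewrite (is_RInt_unique _ _ _ _ Hftc), Hends in E1. lra.
Qed.

Lemma is_derive_BesselK0 z : 0 < z -> is_derive (BesselK 0) z (- BesselK 1 z).
Proof.
  intros Hz. rewrite (BesselK_RInt_K_kernel 1) by (lia || exact Hz).
  apply is_derive_ext_loc with (f := fun y => RInt (K_kernel 0 y) 0 1).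
  { apply (filter_imp (fun y => 0 < y)); [|apply (open_gt 0), Hz].
    intros y Hy. symmetry. apply BesselK_RInt_K_kernel; [lia | exact Hy]. }
  apply is_derive_RInt_K_kernel, Hz.
Qed.

Lemma is_derive_mult_BesselK1 z : 0 < z ->
  is_derive (fun y => y * BesselK 1 y) z (- (z * BesselK 0 z)).
Proof.
  intros Hz.
  apply is_derive_ext_loc with (f := fun y => y * RInt (K_kernel 1 y) 0 1).
  { apply (filter_imp (fun y => 0 < y)); [|apply (open_gt 0), Hz].
    intros y Hy. rewrite BesselK_RInt_K_kernel; [reflexivity | lia | exact Hy]. }
  replace (- (z * BesselK 0 z))
    with (1 * RInt (K_kernel 1 z) 0 1 + z * - RInt (K_kernel 2 z) 0 1).
  2:{ rewrite BesselK_RInt_K_kernel by (lia || exact Hz).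
      pose proof (K_kernel_recurrence z Hz). lra. }
  apply (is_derive_mult (fun y => y) (fun y => RInt (K_kernel 1 y) 0 1));
    [apply (is_derive_id (K := R_AbsRing)) | apply is_derive_RInt_K_kernel, Hz | apply Rmult_comm].
Qed.

Lemma BesselK_pos n z : (n <= 1)%nat -> 0 < z -> 0 < BesselK n z.
Proof.
  intros Hn Hz. rewrite BesselK_RInt_K_kernel by assumption.
  apply RInt_gt_0; [lra| |intros u _; apply K_kernel_continuous_in_u, Hz].
  intros u Hu. unfold K_kernel. destruct (Rle_dec u 0); [lra|].
  pose proof (ch_pos u ltac:(lra)).
  apply Rdiv_lt_0_compat; [apply Rmult_lt_0_compat; [apply pow_lt|apply exp_pos]|]; lra.
Qed.

(** * The Bessel profile and the boundary value problem *)

Definition bessel_comb0 (C1 C2 z : R) : R := C1 * BesselI 0 z + C2 * BesselK 0 z.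
Definition bessel_comb1 (C1 C2 z : R) : R := C1 * BesselI 1 z - C2 * BesselK 1 z.

Lemma is_derive_bessel_comb0 C1 C2 z : 0 < z ->
  is_derive (bessel_comb0 C1 C2) z (bessel_comb1 C1 C2 z).
Proof.
  intros Hz. unfold bessel_comb1.
  replace (C1 * BesselI 1 z - C2 * BesselK 1 z)
    with (C1 * BesselI 1 z + C2 * - BesselK 1 z) by ring.
  apply (is_derive_plus (fun y => C1 * BesselI 0 y) (fun y => C2 * BesselK 0 y)).
  - apply (is_derive_scal (BesselI 0)), is_derive_BesselI0.
  - apply (is_derive_scal (BesselK 0)), is_derive_BesselK0, Hz.
Qed.

Lemma is_derive_mult_bessel_comb1 C1 C2 z : 0 < z ->
  is_derive (fun y => y * bessel_comb1 C1 C2 y) z (z * bessel_comb0 C1 C2 z).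
Proof.
  intros Hz.
  apply is_derive_ext with
    (f := fun y => C1 * (y * BesselI 1 y) + C2 * - (y * BesselK 1 y)).
  { intros y. change (NormedModule.sort _ _) with R. unfold bessel_comb1. ring. }
  replace (z * bessel_comb0 C1 C2 z)
    with (C1 * (z * BesselI 0 z) + C2 * - - (z * BesselK 0 z))
    by (unfold bessel_comb0; ring).
  apply (is_derive_plus (fun y => C1 * (y * BesselI 1 y))
                        (fun y => C2 * - (y * BesselK 1 y))).
  - apply (is_derive_scal (fun y => y * BesselI 1 y)), is_derive_mult_BesselI1.
  - apply (is_derive_scal (fun y => - (y * BesselK 1 y))).
    apply (is_derive_opp (fun y => y * BesselK 1 y)), is_derive_mult_BesselK1, Hz.
Qed.

Definition bessel_arg (delta c x : R) : R := 2 * sqrt (delta * (c - x)).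

Lemma bessel_arg_pos delta c x : 0 < delta -> x < c -> 0 < bessel_arg delta c x.
Proof.
  intros Hd Hx. unfold bessel_arg.
  pose proof (sqrt_lt_R0 (delta * (c - x)) ltac:(nra)). lra.
Qed.

Lemma bessel_arg_sqr delta c x : 0 < delta -> x < c ->
  bessel_arg delta c x * bessel_arg delta c x = 4 * (delta * (c - x)).
Proof.
  intros Hd Hx. unfold bessel_arg.
  rewrite <- (sqrt_sqrt (delta * (c - x))) at 3 by nra. ring.
Qed.

Lemma is_derive_bessel_arg delta c x : 0 < delta -> x < c ->
  is_derive (bessel_arg delta c) x (- 2 * delta / bessel_arg delta c x).
Proof.
  intros Hd Hx. pose proof (bessel_arg_pos delta c x Hd Hx) as Hz.
  unfold bessel_arg in *. auto_derive; [nra|].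
  replace (c + - x) with (c - x) by ring. field. lra.
Qed.

Lemma sqrt_div_bessel_arg delta c x : 0 < delta -> x < c ->
  sqrt ((c - x) / delta) = bessel_arg delta c x / (2 * delta).
Proof.
  intros Hd Hx. unfold bessel_arg.
  replace ((c - x) / delta) with (delta * (c - x) / (delta * delta)) by (field; lra).
  rewrite sqrt_div_alt, sqrt_square by nra. field. lra.
Qed.

Definition bessel_flux (C1 C2 delta c x : R) : R :=
  - (bessel_arg delta c x * bessel_comb1 C1 C2 (bessel_arg delta c x)) / (2 * delta).

Lemma is_derive_bessel_comb0_arg C1 C2 delta c x : 0 < delta -> x < c ->
  is_derive (fun y => bessel_comb0 C1 C2 (bessel_arg delta c y)) x
    (delta / (c - x) * bessel_flux C1 C2 delta c x).
Proof.
  intros Hd Hx. pose proof (bessel_arg_pos delta c x Hd Hx) as Hz.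
  pose proof (bessel_arg_sqr delta c x Hd Hx) as Hz2.
  set (z := bessel_arg delta c x) in *.
  replace (delta / (c - x) * bessel_flux C1 C2 delta c x)
    with (- 2 * delta / z * bessel_comb1 C1 C2 z).
  2:{ unfold bessel_flux. fold z.
      replace (c - x) with (z * z / (4 * delta)) by (rewrite Hz2; field; lra).
      field. lra. }
  apply (is_derive_comp (bessel_comb0 C1 C2) (bessel_arg delta c)).
  - apply is_derive_bessel_comb0, Hz.
  - apply is_derive_bessel_arg; assumption.
Qed.

Lemma is_derive_bessel_flux C1 C2 delta c x : 0 < delta -> x < c ->
  is_derive (bessel_flux C1 C2 delta c) x (bessel_comb0 C1 C2 (bessel_arg delta c x)).
Proof.
  intros Hd Hx. pose proof (bessel_arg_pos delta c x Hd Hx) as Hz.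
  apply is_derive_ext with
    (f := fun y => - / (2 * delta) *
                   (fun z => z * bessel_comb1 C1 C2 z) (bessel_arg delta c y)).
  { intros y. change (NormedModule.sort _ _) with R. unfold bessel_flux. field. lra. }
  set (z := bessel_arg delta c x) in *.
  replace (bessel_comb0 C1 C2 z)
    with (- / (2 * delta) * (- 2 * delta / z * (z * bessel_comb0 C1 C2 z)))
    by (field; lra).
  apply (is_derive_scal (fun y => (fun z => z * bessel_comb1 C1 C2 z) (bessel_arg delta c y))).
  apply (is_derive_comp (fun z => z * bessel_comb1 C1 C2 z) (bessel_arg delta c)).
  - apply is_derive_mult_bessel_comb1, Hz.
  - apply is_derive_bessel_arg; assumption.
Qed.

Lemma bessel_comb_boundary (a z0 z1 : R) :
  let D := BesselI 0 z0 * BesselK 1 z1 + BesselK 0 z0 * BesselI 1 z1 in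
  D <> 0 ->
  bessel_comb0 (a * BesselK 1 z1 / D) (a * BesselI 1 z1 / D) z0 = a /\
  bessel_comb1 (a * BesselK 1 z1 / D) (a * BesselI 1 z1 / D) z1 = 0.
Proof.
  intros D HD. unfold bessel_comb0, bessel_comb1, D in *. split; field; exact HD.
Qed.

Lemma BesselIK_cross_pos z0 z1 : 0 < z0 -> 0 < z1 ->
  0 < BesselI 0 z0 * BesselK 1 z1 + BesselK 0 z0 * BesselI 1 z1.
Proof.
  intros Hz0 Hz1.
  pose proof (BesselI0_pos z0). pose proof (BesselI1_pos z1 Hz1).
  pose proof (BesselK_pos 0 z0 ltac:(lia) Hz0). pose proof (BesselK_pos 1 z1 ltac:(lia) Hz1).
  nra.
Qed.

Lemma is_derive_continuity_pt f x l : is_derive f x l -> continuity_pt f x.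
Proof.
  intros Hf. apply continuity_pt_filterlim.
  apply (ex_derive_continuous (K := R_AbsRing) (V := R_NormedModule)). exists l. exact Hf.
Qed.

Lemma is_derive_nonneg_le (f df : R -> R) a b : a <= b ->
  (forall x, a <= x <= b -> is_derive f x (df x)) ->
  (forall x, a <= x <= b -> 0 <= df x) -> f a <= f b.
Proof.
  intros Hab Hf Hdf.
  destruct (MVT_gen f a b df) as [c [Hc Hfc]];
    rewrite ?Rmin_left, ?Rmax_right in * by lra.
  - intros x Hx. apply Hf. lra.
  - intros x Hx. apply (is_derive_continuity_pt f x (df x)), Hf, Hx.
  - pose proof (Hdf c Hc). nra.
Qed.

Lemma continuity_pt_eq0_right (f : R -> R) a b : a < b -> continuity_pt f b ->
  (forall x, a < x < b -> f x = 0) -> f b = 0.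
Proof.
  intros Hab Hc Hf. destruct (Req_dec (f b) 0) as [|Hfb]; [assumption|exfalso].
  destruct (Hc (Rabs (f b)) (Rabs_pos_lt _ Hfb)) as [alp [Halp Hd]].
  pose proof (Rmin_l alp (b - a)). pose proof (Rmin_r alp (b - a)).
  pose proof (Rmin_pos alp (b - a) Halp ltac:(lra)).
  pose (x := b - Rmin alp (b - a) / 2).
  specialize (Hd x). simpl in Hd. unfold R_dist, D_x, no_cond in Hd.
  rewrite Hf, Rminus_0_l, Rabs_Ropp in Hd by (unfold x; lra).
  apply (Rlt_irrefl (Rabs (f b))), Hd.
  split; [split; [exact I | unfold x; lra]|].
  unfold x. rewrite Rabs_left by lra. lra.
Qed.

Lemma first_order_bvp_unique (k E H : R -> R) :
  (forall x, 0 <= x <= 1 -> 0 <= k x) ->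
  (forall x, 0 <= x <= 1 -> is_derive E x (k x * H x)) ->
  (forall x, 0 <= x <= 1 -> is_derive H x (E x)) ->
  E 0 = 0 -> H 1 = 0 -> forall x, 0 <= x <= 1 -> E x = 0 /\ H x = 0.
Proof.
  intros Hk HE HH E0 H1.
  pose (dW := fun x => k x * H x * H x + E x * E x).
  assert (HW : forall x, 0 <= x <= 1 -> is_derive (fun y => E y * H y) x (dW x)).
  { intros x Hx. apply (is_derive_mult E H); [apply HE, Hx | apply HH, Hx | apply Rmult_comm]. }
  assert (HdW : forall x, 0 <= x <= 1 -> E x * E x <= dW x).
  { intros x Hx. unfold dW. pose proof (Hk x Hx).
    assert (0 <= k x * (H x * H x)) by (apply Rmult_le_pos; [|apply Rle_0_sqr]; lra).
    lra. }
  assert (Hmono : forall x y, 0 <= x <= y -> y <= 1 -> E x * H x <= E y * H y).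
  { intros x y Hxy Hy. apply (is_derive_nonneg_le (fun y => E y * H y) dW); [lra| |].
    - intros t Ht. apply HW. lra.
    - intros t Ht. pose proof (HdW t ltac:(lra)). pose proof (Rle_0_sqr (E t)).
      unfold Rsqr in *. lra. }
  assert (W0 : forall x, 0 <= x <= 1 -> E x * H x = 0).
  { intros x Hx. pose proof (Hmono 0 x ltac:(lra) ltac:(lra)).
    pose proof (Hmono x 1 ltac:(lra) ltac:(lra)). rewrite E0, H1 in *. lra. }
  assert (Einner : forall x, 0 < x < 1 -> E x = 0).
  { intros x Hx.
    assert (HdW0 : dW x = 0).
    { rewrite <- (is_derive_unique _ _ _ (HW x ltac:(lra))). apply is_derive_unique.
      apply is_derive_ext_loc with (f := fun _ => 0); [|apply (is_derive_const (K := R_AbsRing) (V := R_NormedModule))].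
      apply (filter_imp (fun y => 0 < y < 1)).
      - intros y Hy. symmetry. apply W0. lra.
      - apply (open_and _ _ (open_gt 0) (open_lt 1)). exact Hx. }
    pose proof (HdW x ltac:(lra)). nra. }
  assert (Eall : forall x, 0 <= x <= 1 -> E x = 0).
  { intros x Hx.
    destruct (Req_dec x 0) as [->|Hx0]; [exact E0|].
    destruct (Req_dec x 1) as [->|Hx1]; [|apply Einner; lra].
    apply (continuity_pt_eq0_right E 0 1); [lra | | exact Einner].
    apply (is_derive_continuity_pt E 1 (k 1 * H 1)), HE. lra. }
  intros x Hx. split; [apply Eall, Hx|].
  assert (H x <= H 1).
  { apply (is_derive_nonneg_le H E); [lra | intros t Ht; apply HH; lra |].
    intros t Ht. rewrite Eall by lra. lra. }
  assert (- H x <= - H 1).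
  { apply (is_derive_nonneg_le (fun y => - H y) (fun y => - E y)); [lra | |].
    - intros t Ht. apply (is_derive_opp H), HH. lra.
    - intros t Ht. rewrite Eall by lra. lra. }
  lra.
Qed.

Lemma model_scaling (L K Lpa numin numax nustar deltastar : R) :
  0 < L -> 0 < K -> 0 < Lpa -> 0 < numin -> numin < numax ->
  nustar = numax / (numax - numin) -> deltastar = Lpa * L ^ 2 / (K * (numax - numin)) ->
  0 < deltastar /\ 1 < nustar /\
  forall y, y < nustar ->
    Lpa * L ^ 2 / K = deltastar / (nustar - y) * (numax - (numax - numin) * y).
Proof.
  intros HL HK HLpa Hnumin Hnu Hns Hds. split; [|split].
  - rewrite Hds. apply Rdiv_lt_0_compat; apply Rmult_lt_0_compat; try apply pow_lt; lra.
  - assert (nustar - 1 = numin / (numax - numin)) by (rewrite Hns; field; lra).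
    pose proof (Rdiv_lt_0_compat numin (numax - numin) Hnumin ltac:(lra)). lra.
  - intros y Hy.
    replace (numax - (numax - numin) * y) with ((numax - numin) * (nustar - y))
      by (rewrite Hns; field; lra).
    rewrite Hds. field. repeat split; lra.
Qed.

Lemma source_flux_system (nu p u w : R -> R) (k beta a s1 s2 p0 w0 ql x : R) :
  C2_on01 p -> C2_on01 u -> C2_on01 w -> 0 <= x <= 1 -> ex_derive nu x ->
  beta = k * nu x ->
  a * Derive (fun y => nu y * Derive p y) x - s1 * Derive (fun y => nu y * Derive u y) x
    - s2 * Derive (fun y => nu y * Derive w y) x
    + beta * (a * (p0 - p x) + s1 * u x + s2 * (w x - w0)) - ql = 0 ->
  is_derive (fun y => beta * (a * (p0 - p y) + s1 * u y + s2 * (w y - w0)) - ql) x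
    (k * (nu x * (- a * Derive p x + s1 * Derive u x + s2 * Derive w x))) /\
  is_derive (fun y => nu y * (- a * Derive p y + s1 * Derive u y + s2 * Derive w y)) x
    (beta * (a * (p0 - p x) + s1 * u x + s2 * (w x - w0)) - ql).
Proof.
  intros Hp Hu Hw Hx Hnu Hbeta Hode.
  destruct (Hp x Hx) as [Ep [Ep' _]]. destruct (Hu x Hx) as [Eu [Eu' _]].
  destruct (Hw x Hx) as [Ew [Ew' _]].
  split.
  - auto_derive; [repeat split; assumption|].
    change (fun y => p y) with p. change (fun y => u y) with u. change (fun y => w y) with w.
    rewrite Hbeta. ring.
  - rewrite !Derive_mult in Hode by assumption.
    auto_derive; [repeat split; assumption|].
    change (fun y => nu y) with nu. change (fun y => Derive p y) with (Derive p).
    change (fun y => Derive u y) with (Derive u). change (fun y => Derive w y) with (Derive w).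
    lra.
Qed.

Theorem mainTheorem3
  (L K Lpa t0 numin numax sigma1 sigma2 p0 w0 wD ql : R)
  (p u w : R -> R)
  (HL : 0 < L) (HK : 0 < K) (HLpa : 0 < Lpa) (Ht0 : 0 < t0)
  (Hnumin : 0 < numin) (Hnu : numin < numax)
  (Hp : C2_on01 p) (Hu : C2_on01 u) (Hw : C2_on01 w) :
  let beta := Lpa * L ^ 2 / K in
  let nu := fun x => numax - (numax - numin) * x in
  let qU := fun x => beta * (/ t0 * (p0 - p x) + sigma1 * u x + sigma2 * (w x - w0)) in
  let jU := fun x => L * nu x *
              (- / t0 * Derive p x + sigma1 * Derive u x + sigma2 * Derive w x) in
  (forall x, 0 <= x <= 1 ->
     / t0 * Derive (fun y => nu y * Derive p y) x
     - sigma1 * Derive (fun y => nu y * Derive u y) x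
     - sigma2 * Derive (fun y => nu y * Derive w y) x
     + qU x - ql = 0) ->
  p 0 = 1 -> u 0 = 1 -> w 0 = wD ->
  Derive p 1 = 0 -> Derive u 1 = 0 -> Derive w 1 = 0 ->
  let nustar := numax / (numax - numin) in
  let deltastar := Lpa * L ^ 2 / (K * (numax - numin)) in
  let z := fun x => 2 * sqrt (deltastar * (nustar - x)) in
  let z0 := z 0 in
  let z1 := z 1 in
  let q0 := beta * (/ t0 * (p0 - 1) + sigma1 + sigma2 * (wD - w0)) in
  let D := BesselI 0 z0 * BesselK 1 z1 + BesselK 0 z0 * BesselI 1 z1 in
  let C1 := (q0 - ql) * BesselK 1 z1 / D in
  let C2 := (q0 - ql) * BesselI 1 z1 / D in
  forall x, 0 <= x <= 1 ->
    qU x = C1 * BesselI 0 (z x) + C2 * BesselK 0 (z x) + ql /\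
    jU x = - L * sqrt ((nustar - x) / deltastar) *
             (C1 * BesselI 1 (z x) - C2 * BesselK 1 (z x)).
Proof.
  intros beta nu qU jU Hode Hp0 Hu0 Hw0 Hp1 Hu1 Hw1 nustar deltastar z z0 z1 q0 D C1 C2 x Hx.
  destruct (model_scaling L K Lpa numin numax nustar deltastar) as [Hdelta [Hnustar Hbeta]];
    try assumption; try reflexivity.
  assert (Hz : forall y, 0 <= y <= 1 -> 0 < z y) by (intros y Hy; apply bessel_arg_pos; lra).
  destruct (bessel_comb_boundary (q0 - ql) z0 z1) as [Hb0 Hb1].
  { apply Rgt_not_eq, BesselIK_cross_pos; apply Hz; lra. }
  change (bessel_comb0 C1 C2 z0 = q0 - ql) in Hb0. change (bessel_comb1 C1 C2 z1 = 0) in Hb1.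
  pose (k y := deltastar / (nustar - y)).
  pose (H y := nu y * (- / t0 * Derive p y + sigma1 * Derive u y + sigma2 * Derive w y)).
  assert (Hmodel : forall y, 0 <= y <= 1 ->
            is_derive (fun y => qU y - ql) y (k y * H y) /\ is_derive H y (qU y - ql)).
  { intros y Hy. apply source_flux_system; try apply Hode; try assumption.
    - unfold nu. auto_derive. exact I.
    - apply Hbeta. lra. }
  destruct (first_order_bvp_unique k (fun y => qU y - ql - bessel_comb0 C1 C2 (z y))
              (fun y => H y - bessel_flux C1 C2 deltastar nustar y)) with x
    as [HE HH]; [ | | | | | exact Hx |].
  - intros y Hy. apply Rdiv_le_0_compat; lra.
  - intros y Hy. rewrite Rmult_minus_distr_l.
    apply (is_derive_minus (fun y => qU y - ql)); [apply Hmodel, Hy|].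
    apply is_derive_bessel_comb0_arg; lra.
  - intros y Hy. apply (is_derive_minus H); [apply Hmodel, Hy|].
    apply is_derive_bessel_flux; lra.
  - unfold qU. rewrite Hp0, Hu0, Hw0. fold z0. rewrite Hb0. unfold q0. ring.
  - unfold H, bessel_flux. change (bessel_arg deltastar nustar 1) with z1.
    rewrite Hp1, Hu1, Hw1, Hb1. field. lra.
  - split; [unfold bessel_comb0 in HE; lra|].
    replace (jU x) with (L * H x) by (unfold jU, H; ring).
    replace (H x) with (bessel_flux C1 C2 deltastar nustar x) by lra.
    rewrite sqrt_div_bessel_arg by lra.
    unfold bessel_flux, bessel_comb1. change (bessel_arg deltastar nustar x) with (z x).
    field. lra.
Qed.
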